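(* Let $Q\in\partial D$ and let $v$ be a nonnegative harmonic function with respect to $X^{D}$ with Martin measure $\nu$. Suppose that $\mu$ is a nonnegative finite measure on $\partial D$. If $\displaystyle\lim_{x\rightarrow Q}\frac{\delta_{D}(x)}{v(x)}=0$, then for every $\varepsilon>0$ we have $$ \lim_{x\rightarrow Q}\frac{\int_{\partial D \cap \{|Q-z|\geq \varepsilon\}}M_{D}(x,z)\mu(dz)}{v(x)}=0. $$ If instead we only assume $\displaystyle\lim_{x\rightarrow Q}\frac{\delta_{D}(x)}{v(x)}=0$ as $x\to Q$ nontangentially, then for every $\varepsilon>0$ the conclusion $\displaystyle\lim_{x\rightarrow Q}\frac{\int_{\partial D \cap \{|Q-z|\geq \varepsilon\}}M_{D}(x,z)\mu(dz)}{v(x)}=0$ holds with the limit taken as $x\to Q$ nontangentially.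
   Context: Let $d\geq 2$ and let $X_t=W(S_t)$ be a subordinate Brownian motion, where $W$ is a $d$-dimensional Brownian motion and $S$ is an independent subordinator with Laplace exponent $\phi(\lambda)=\lambda+\int_{(0,\infty)}(1-e^{-\lambda t})\mu(t)\,dt$, where $\phi$ is a complete Bernstein function (the Lévy measure has a completely monotone density $\mu(t)$) and for every $K>0$ there is $c=c(K)>1$ with $\mu(r)\le c\,\mu(2r)$ for $r\in(0,K)$. Let $D\subset\mathbb{R}^d$ be a bounded $C^{1,1}$ open set with characteristics $(r_0,\Lambda_0)$, $X^D$ the process $X$ killed upon exiting $D$, $G_D$ its Green function, and $\delta_D(x)$ the Euclidean distance from $x$ to $D^c$. A function $u:D\to[0,\infty)$ is harmonic with respect to $X^D$ if $u(x)=\mathbb{E}_x[u(X^D_{\tau_B})]$ for every $x\in B$ and every open $B$ with compact closure in $D$ (with $u$ set to $0$ at the cemetery). Fix $x_0\in D$; the Martin kernel is $M_D(x,z)=\lim_{y\to z}G_D(x,y)/G_D(x_0,y)$ for $z\in\partial D$, and every nonnegative harmonic $v$ with respect to $X^D$ has the form $v(x)=\int_{\partial D}M_D(x,z)\nu(dz)$ for a unique finite measure $\nu$ on $\partial D$ (its Martin measure). The Martin kernel satisfies $M_D(x,z)\asymp \delta_D(x)/|x-z|^d$ for $x\in D$, $z\in\partial D$. For $Q\in\partial D$ and $\beta>1$ let $A_Q^\beta=\{x\in D:\delta_D(x)<r_0,\ |x-Q|<\beta\delta_D(x)\}$; $x\to Q$ nontangentially means $x\to Q$ with $x\in A_Q^\beta$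 for some $\beta>1$. *)

From HB Require Import structures.
From mathcomp Require Import all_boot all_order all_algebra.
From mathcomp Require Import all_classical all_reals all_analysis.
Set Implicit Arguments. Unset Strict Implicit. Unset Printing Implicit Defensive.
Import Order.TTheory GRing.Theory Num.Theory.
Import numFieldNormedType.Exports.
Local Open Scope classical_set_scope.
Local Open Scope ring_scope.

Section Defs.
Variables (R : realType) (d : nat).
Notation Vec := 'rV[R]_d.

Definition edot (x y : Vec) : R := \sum_(i < d) x 0 i * y 0 i.
Definition enorm (x : Vec) : R := Num.sqrt (edot x x).

Definition BorelRd := g_sigma_algebraType (@open Vec).

Definition bdry (D : set Vec) : set Vec := closure D `\` interior D.

Definition delta (D : set Vec) (x : Vec) : R :=
  inf [set enorm (x - y) | y in ~` D].

Definition bounded_set (D : set Vec) : Prop :=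
  exists M : R, forall x, D x -> enorm x <= M.

(** Bounded C^{1,1} open set with characteristics (r0, Lambda0):
    for every Q in the boundary there is an orthonormal coordinate system
    centred at Q -- given by a unit vector e (the last coordinate axis) --
    and a function phi of the first d-1 coordinates (i.e. phi(y + t e) = phi(y)),
    of class C^{1,1} with phi(0)=0, grad phi(0)=0, |grad phi| <= Lambda0,
    |grad phi(y) - grad phi(z)| <= Lambda0 |y - z|, such that
    B(Q,r0) /\ D = { y : |y - Q| < r0, <y - Q, e> > phi(y - Q) }. *)
Definition C11_open_set (D : set Vec) (r0 L0 : R) : Prop :=
  open D /\ bounded_set D /\ 0 < r0 /\ 0 < L0 /\
   forall Q, bdry D Q ->
   exists (e : Vec) (phi : Vec -> R) (g : Vec -> Vec),
     enorm e = 1 /\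
     (forall y t, phi (y + t *: e) = phi y) /\
     (forall y w, is_derive y w phi (edot (g y) w)) /\
     phi 0 = 0 /\ g 0 = 0 /\
     (forall y, enorm (g y) <= L0) /\
     (forall y z, enorm (g y - g z) <= L0 * enorm (y - z)) /\
     (forall y, (D y /\ enorm (y - Q) < r0) <->
                (enorm (y - Q) < r0 /\ phi (y - Q) < edot (y - Q) e)).

Definition ntregion (D : set Vec) (r0 : R) (Q : Vec) (beta : R) : set Vec :=
  [set x | D x /\ delta D x < r0 /\ enorm (x - Q) < beta * delta D x].

Definition martin_estimate (D : set Vec) (M : Vec -> Vec -> R) : Prop :=
  exists c : R, 1 <= c /\
    forall x z, D x -> bdry D z ->
      c^-1 * (delta D x / enorm (x - z) ^+ d) <= M x z /\
      M x z <= c * (delta D x / enorm (x - z) ^+ d).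

End Defs.

From HB Require Import structures.
From mathcomp Require Import all_boot all_order all_algebra.
From mathcomp Require Import all_classical all_reals all_analysis.
From mathcomp Require Import ring lra.
Import Order.TTheory GRing.Theory Num.Theory.
Import numFieldNormedType.Exports.
Local Open Scope classical_set_scope.
Local Open Scope ring_scope.

(** Away from the pole the Martin kernel is controlled by [delta_D]: if [x] is
    close to [Q] compared with [eps] and [|Q - z| >= eps], then [|x - z|] is
    bounded below by a fixed multiple of [eps], so the estimate
    [M_D(x,z) <= c delta_D(x) / |x - z|^d] gives [M_D(x,z) <= C_eps delta_D(x)]
    on the region of integration.  Integrating against the finite measure [mu],
    the ratio with [v(x)] is at most [C_eps mu(boundary D) delta_D(x) / |v(x)|],
    which tends to 0 along whichever approach filter is assumed. *)

Section euclidean_norm.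
Variables (R : realType) (d : nat).
Implicit Types w : 'rV[R]_d.

Lemma edot_ge0 w : 0 <= edot w w.
Proof. by apply: sumr_ge0 => i _; rewrite -expr2 sqr_ge0. Qed.

Lemma mx_norm_coord_le w (i : 'I_d) : `|w 0 i| <= `|w|.
Proof.
rewrite [leRHS]/Num.Def.normr /= mx_normrE.
by apply/bigmax_geP; right; exists (0, i).
Qed.

Lemma mx_norm_le_enorm w : `|w| <= enorm w.
Proof.
rewrite [leLHS]/Num.Def.normr /= mx_normrE.
apply: bigmax_le; first exact: sqrtr_ge0.
move=> [i j] _ /=; rewrite (ord1 i) -sqrtr_sqr ler_sqrt ?edot_ge0 //.
rewrite /edot (bigD1 j) //= -expr2 lerDl.
by apply: sumr_ge0 => k _; rewrite -expr2 sqr_ge0.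
Qed.

Lemma enorm_le_mx_norm w : enorm w <= d%:R * `|w|.
Proof.
rewrite /enorm -[leRHS]ger0_norm ?mulr_ge0 // -sqrtr_sqr.
rewrite ler_sqrt ?sqr_ge0 // /edot exprMn.
apply: (@le_trans _ _ (\sum_(i < d) `|w| ^+ 2)).
  apply: ler_sum => i _; rewrite -expr2 -real_normK ?num_real //.
  by rewrite lerXn2r ?nnegrE ?mx_norm_coord_le.
rewrite sumr_const card_ord -[leLHS]mulr_natl; apply: ler_wpM2r; first exact: sqr_ge0.
by rewrite -natrX ler_nat; case: (d) => // n; rewrite leq_pmull.
Qed.

(* Closeness to [Q] is measured in the sup norm [mx_norm], which induces the
   topology of ['rV_d]; comparing it with [enorm] costs the factor [d]. *)
Lemma enorm_subr_ge (eps : R) (Q x z : 'rV[R]_d) : (0 < d)%N ->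
  eps <= enorm (Q - z) -> `|Q - x| < eps / (2 * d%:R) ->
  eps / (2 * d%:R) <= enorm (x - z).
Proof.
move=> d_gt0 epsQz xQ; set r := eps / (2 * d%:R).
have dR_gt0 : (0 : R) < d%:R by rewrite ltr0n.
have eps_split : eps / d%:R = r + r.
  by rewrite /r -mulr2n -mulr_natr; field; exact/lt0r_neq0.
have Qz : r + r <= `|Q - z|.
  by rewrite -eps_split ler_pdivrMr // mulrC (le_trans epsQz) ?enorm_le_mx_norm.
apply: le_trans (mx_norm_le_enorm (x - z)).
have := ler_distD x Q z; lra.
Qed.

End euclidean_norm.

Section integral_bounds.
Context {dd : measure_display} {T : measurableType dd} {R : realType}.

(* Monotonicity of the integral of nonnegative functions, without any
   measurability assumption: both sides are suprema over simple functions. *)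
Lemma ge0_le_integral_nonmeas (mu : {measure set T -> \bar R}) (A : set T)
    (f g : T -> \bar R) :
  (forall x, A x -> (0 <= f x)%E) -> (forall x, A x -> (f x <= g x)%E) ->
  (\int[mu]_(x in A) f x <= \int[mu]_(x in A) g x)%E.
Proof.
move=> f0 fg.
have g0 x : A x -> (0 <= g x)%E by move=> Ax; exact: le_trans (f0 _ Ax) (fg _ Ax).
rewrite (ge0_integralE _ f0) (ge0_integralE _ g0).
apply: ereal_sup_le => _ [h hf <-]; exists h => // x.
apply: le_trans (hf x) _; rewrite /patch; case: ifP => // /set_mem Ax.
exact: fg.
Qed.

Lemma Rintegral_le_bound (mu : {finite_measure set T -> \bar R}) {A : set T}
    {f : T -> R} {K : R} :
  0 <= K -> (forall z, A z -> 0 <= f z <= K) ->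
  Rintegral mu A f <= K * fine (mu setT).
Proof.
move=> K_ge0 fK.
have I0 : (0 <= \int[mu]_(x in A) (f x)%:E)%E.
  by apply: integral_ge0 => z /fK /andP[]; rewrite lee_fin.
have IK : (\int[mu]_(x in A) (f x)%:E <= K%:E * mu setT)%E.
  rewrite integral_mkcond -(integral_cst mu measurableT).
  by apply: ge0_le_integral_nonmeas; move=> x _; rewrite /patch;
    case: ifP => [/set_mem /fK /andP[]|]; rewrite /= ?lee_fin.
have muT : mu setT \is a fin_num by exact: fin_num_measure.
rewrite /Rintegral; have -> : K * fine (mu setT) = fine (K%:E * mu setT) by rewrite fineM.
apply: fine_le => //; last by rewrite fin_numM.
rewrite fin_numElt (lt_le_trans _ I0) ?ltNyr //=.
by apply: le_lt_trans IK _; rewrite ltey_eq fin_numM.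
Qed.

End integral_bounds.

Lemma cvg0_dominated {T : Type} {F : set_system T} {FF : Filter F}
    {R : realFieldType} {f g : T -> R} (K : R) :
  (\forall x \near F, `|f x| <= K * `|g x|) -> g @ F --> 0 -> f @ F --> 0.
Proof.
move=> fg g0.
have Kg0 : (fun x => K * `|g x|) @ F --> 0.
  by rewrite -(mulr0 K) -(@normr0 _ R); apply: cvgMl_tmp; exact: cvg_norm.
apply: (squeeze_cvgr (f := fun x => - (K * `|g x|)) _ _ Kg0).
  by near=> x; rewrite -ler_norml; near: x.
by rewrite -oppr0; apply: cvgN.
Unshelve. all: by end_near. Qed.

Section far_martin_integral.
Variables (R : realType) (d : nat) (D : set 'rV[R]_d).
Variable MD : 'rV[R]_d -> 'rV[R]_d -> R.
Hypothesis MD_ge0 : forall x z, D x -> bdry D z -> 0 <= MD x z.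
Hypothesis MD_est : martin_estimate D MD.

Lemma martin_kernel_far_le : exists c : R, 0 < c /\
  forall (r : R) x z, 0 < r -> D x -> bdry D z -> r <= enorm (x - z) ->
    MD x z <= c * `|delta D x| * r^-1 ^+ d.
Proof.
have [c [c_ge1 Mle]] := MD_est; have c_gt0 : 0 < c by exact: lt_le_trans c_ge1.
exists c; split => // r x z r_gt0 Dx bz rxz.
have xz_gt0 : 0 < enorm (x - z) by exact: lt_le_trans rxz.
apply: le_trans (proj2 (Mle _ _ Dx bz)) _; rewrite -mulrA.
apply: ler_wpM2l; first exact: ltW.
have inv_le : (enorm (x - z) ^+ d)^-1 <= r^-1 ^+ d.
  by rewrite exprVn lef_pV2 ?posrE ?exprn_gt0 // lerXn2r // nnegrE ltW.
apply: (@le_trans _ _ (`|delta D x| / enorm (x - z) ^+ d)).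
  by apply: ler_wpM2r; [rewrite invr_ge0 exprn_ge0 // ltW | exact/real_ler_norm/num_real].
exact: ler_wpM2l.
Qed.

Definition far_martin_integral (mu : {finite_measure set BorelRd R d -> \bar R})
    (Q : 'rV[R]_d) (eps : R) (x : 'rV[R]_d) : R :=
  Rintegral mu ((bdry D `&` [set z | eps <= enorm (Q - z)]) : set (BorelRd R d))
    (MD x).

Lemma far_martin_integral_le (mu : {finite_measure set BorelRd R d -> \bar R}) :
  (0 < d)%N -> exists C : R, forall (Q : 'rV[R]_d) (eps : R) x, 0 < eps -> D x ->
    `|Q - x| < eps / (2 * d%:R) ->
    `|far_martin_integral mu Q eps x| <= C * (eps / (2 * d%:R))^-1 ^+ d * `|delta D x|.
Proof.
move=> d_gt0; have [c [c_gt0 Mle]] := martin_kernel_far_le.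
exists (c * fine (mu setT)) => Q eps x eps_gt0 Dx xQ.
set r := eps / (2 * d%:R).
have r_gt0 : 0 < r by rewrite divr_gt0 // mulr_gt0 // ltr0n.
have Mbound z : (bdry D `&` [set z | eps <= enorm (Q - z)]) z ->
    0 <= MD x z <= c * `|delta D x| * r^-1 ^+ d.
  move=> [bz /= epsQz]; rewrite MD_ge0 //=.
  by apply: Mle => //; exact: (@enorm_subr_ge R d eps Q x z d_gt0 epsQz xQ).
rewrite /far_martin_integral ger0_norm; last by apply: Rintegral_ge0 => z /Mbound /andP[].
have bound_ge0 : 0 <= c * `|delta D x| * r^-1 ^+ d.
  apply: mulr_ge0; first exact: mulr_ge0 (ltW c_gt0) (normr_ge0 _).
  by apply/exprn_ge0; rewrite invr_ge0 ltW.
apply: le_trans (Rintegral_le_bound mu bound_ge0 Mbound) _.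
by rewrite le_eqVlt; apply/orP; left; apply/eqP; ring.
Qed.

Theorem cvg_far_martin_integral_ratio (mu : {finite_measure set BorelRd R d -> \bar R})
    (Q : 'rV[R]_d) (v : 'rV[R]_d -> R) (S : set 'rV[R]_d) :
  (0 < d)%N -> S `<=` D ->
  (fun x => delta D x / v x) @ within S (nbhs Q) --> 0 ->
  forall eps : R, 0 < eps ->
    (fun x => far_martin_integral mu Q eps x / v x) @ within S (nbhs Q) --> 0.
Proof.
move=> d_gt0 SD ratio0 eps eps_gt0; have [C Ile] := far_martin_integral_le mu d_gt0.
set r := eps / (2 * d%:R).
have r_gt0 : 0 < r by rewrite divr_gt0 // mulr_gt0 // ltr0n.
apply: (cvg0_dominated (C * r^-1 ^+ d) _ ratio0).
near=> x.
have Sx : S x by near: x; exact: near_withinT.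
have xQ : `|Q - x| < r.
  by near: x; apply: cvgr_dist_lt => //; apply: cvg_within_filter; exact: cvg_id.
rewrite !normrM !mulrA; apply: ler_wpM2r; first exact: normr_ge0.
exact: Ile (SD _ Sx) xQ.
Unshelve. all: by end_near. Qed.

End far_martin_integral.

Theorem lemma3p3 (R : realType) (d : nat) (hd : (2 <= d)%N)
  (D : set 'rV[R]_d) (r0 L0 : R) (hD : C11_open_set D r0 L0)
  (x0 : 'rV[R]_d) (hx0 : D x0)
  (MD : 'rV[R]_d -> 'rV[R]_d -> R)
  (hMnn : forall x z, D x -> bdry D z -> 0 <= MD x z)
  (hMx0 : forall z, bdry D z -> MD x0 z = 1)
  (hMmeas : forall x, D x -> measurable_fun (bdry D : set (BorelRd R d)) (MD x : BorelRd R d -> R))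
  (hMest : martin_estimate D MD)
  (Q : 'rV[R]_d) (hQ : bdry D Q)
  (nu : {finite_measure set BorelRd R d -> \bar R})
  (v : 'rV[R]_d -> R)
  (hv : forall x, D x -> (v x)%:E = (\int[nu]_(z in (bdry D : set (BorelRd R d))) (MD x z)%:E)%E)
  (mu : {finite_measure set BorelRd R d -> \bar R}) :
  ((fun x => delta D x / v x) @ within D (nbhs Q) --> (0 : R) ->
   forall eps : R, 0 < eps ->
     (fun x => Rintegral mu
        ((bdry D `&` [set z | eps <= enorm (Q - z)]) : set (BorelRd R d)) (MD x)
               / v x) @ within D (nbhs Q) --> (0 : R))
  /\
  ((forall beta : R, 1 < beta ->
      (fun x => delta D x / v x) @ within (ntregion D r0 Q beta) (nbhs Q)
        --> (0 : R)) ->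
   forall eps : R, 0 < eps -> forall beta : R, 1 < beta ->
     (fun x => Rintegral mu
        ((bdry D `&` [set z | eps <= enorm (Q - z)]) : set (BorelRd R d)) (MD x)
               / v x) @ within (ntregion D r0 Q beta) (nbhs Q) --> (0 : R)).
Proof.
have d_gt0 : (0 < d)%N by exact: leq_trans hd.
have far_ratio0 S :=
  @cvg_far_martin_integral_ratio R d D MD hMnn hMest mu Q v S d_gt0.
split; first exact: (far_ratio0 D (@subset_refl _ D)).
move=> ratio0 eps eps_gt0 beta beta_gt1.
have nt_sub : ntregion D r0 Q beta `<=` D by move=> x [].
exact: (far_ratio0 _ nt_sub (ratio0 _ beta_gt1) _ eps_gt0).
Qed.
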